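(* Let $\varphi:[0,\infty]\to[0,\infty]$ be a nonconstant continuous nondecreasing convex function such that $\int_{t_*}^{\infty}(t/\varphi(t))^{\alpha}dt<\infty$ for some $\alpha>0$ and some $t_*\in(t_0,\infty)$, where $t_0=\sup\{t:\varphi(t)=0\}$ ($t_0=0$ if $\varphi>0$ everywhere), and let $\tilde\alpha\in(\alpha,\infty)$. Then $\varphi=\psi\circ\tilde\varphi$ where $\psi,\tilde\varphi:[0,\infty]\to[0,\infty]$ are strictly convex, $\tilde\varphi\le\varphi$ on $[0,\infty]$, and $\int_{t_*}^{\infty}(t/\tilde\varphi(t))^{\tilde\alpha}dt<\infty$ for some $t_*>t_0$.
   Context: A function $g:[0,\infty]\to[0,\infty]$ is called strictly convex if it is nondecreasing, convex and $\lim_{t\to\infty}g(t)/t=\infty$. Continuity is in the topology of $[0,\infty]$. *)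

From Stdlib Require Import Reals.
Open Scope R_scope.

(* Extended reals; the space [0,oo] is { p : ER | ERnonneg p }. *)
Inductive ER : Type := Fin (x : R) | Inf.

Definition ERnonneg (p : ER) : Prop :=
  match p with Fin x => 0 <= x | Inf => True end.

Definition ERle (p q : ER) : Prop :=
  match p, q with
  | _, Inf => True
  | Inf, Fin _ => False
  | Fin x, Fin y => x <= y
  end.

Definition ERadd (p q : ER) : ER :=
  match p, q with Fin x, Fin y => Fin (x + y) | _, _ => Inf end.

(* scaling by a strictly positive real *)
Definition ERscale (l : R) (p : ER) : ER :=
  match p with Fin x => Fin (l * x) | Inf => Inf end.

Definition ERcomb (l : R) (p q : ER) : ER :=
  ERadd (ERscale l p) (ERscale (1 - l) q).

(* Homeomorphism [0,oo] -> [0,1] : x |-> x/(1+x), oo |-> 1.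
   Used to express the topology of [0,oo]. *)
Definition squash (p : ER) : R :=
  match p with Fin x => x / (1 + x) | Inf => 1 end.

Definition maps_nonneg (g : ER -> ER) : Prop :=
  forall p, ERnonneg p -> ERnonneg (g p).

Definition ER_continuous (g : ER -> ER) : Prop :=
  forall p, ERnonneg p -> forall eps, 0 < eps ->
    exists delta, 0 < delta /\
      forall q, ERnonneg q -> Rabs (squash q - squash p) < delta ->
        Rabs (squash (g q) - squash (g p)) < eps.

Definition ER_nondecreasing (g : ER -> ER) : Prop :=
  forall p q, ERnonneg p -> ERnonneg q -> ERle p q -> ERle (g p) (g q).

Definition ER_convex (g : ER -> ER) : Prop :=
  forall p q l, ERnonneg p -> ERnonneg q -> 0 < l < 1 ->
    ERle (g (ERcomb l p q)) (ERcomb l (g p) (g q)).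

Definition ER_nonconstant (g : ER -> ER) : Prop :=
  exists p q, ERnonneg p /\ ERnonneg q /\ g p <> g q.

Definition ER_superlinear (g : ER -> ER) : Prop :=
  forall M, exists T, 0 < T /\ forall t, T <= t -> ERle (Fin (M * t)) (g (Fin t)).

(* "strictly convex" in the sense of the paper *)
Definition strictly_convex (g : ER -> ER) : Prop :=
  maps_nonneg g /\ ER_nondecreasing g /\ ER_convex g /\ ER_superlinear g.

Definition is_t0 (g : ER -> ER) (t0 : R) : Prop :=
  let Z := fun t => 0 <= t /\ g (Fin t) = Fin 0 in
  is_lub Z t0 \/ ((forall t, ~ Z t) /\ t0 = 0).

(* the integrand (t / g(t))^a, with value 0 where g(t) = oo *)
Definition ratio_pow (g : ER -> ER) (a : R) (t : R) : R :=
  match g (Fin t) with Fin y => Rpower (t / y) a | Inf => 0 end.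

Definition improper_int_finite (f : R -> R) (a : R) : Prop :=
  (forall b, a <= b -> inhabited (Riemann_integrable f a b)) /\
  exists M, forall b (pr : Riemann_integrable f a b), a <= b -> RiemannInt pr <= M.

(* Let phi : [0,oo] -> [0,oo] be convex, nondecreasing, continuous and
   nonconstant with finite improper integral of (t / phi t)^alpha near oo,
   and let theta = alpha / alpha' < 1.  Writing k(m) = m for m <= 1 and
   k(m) = m^theta for m >= 1, the function phit is "the primitive of
   k(phi')": phit(t) is the infimum over partitions 0 = x_0 <= ... <= x_n = t
   of sum (x_{i+1} - x_i) k(slope of phi on [x_i, x_{i+1}]).  Since k is
   concave, refining a partition only lowers the sum, which makes phit
   convex, nondecreasing, superlinear and below phi.  The outer function psi
   is the upper envelope of the lines s |-> phi(u) + j(phi'(u-)) (s - phit u),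
   where j(m) = m / k(m) is nondecreasing; the line at u passes through
   (phit u, phi u) and lies below all the other points (phit t, phi t), so
   phi = psi o phit, and psi is convex and superlinear.  Finally
   t / phit t <= 2^(1+theta) ((t/2) / phi (t/2))^theta for large t, and
   t / phit t is nonincreasing, so the integral for phit with exponent
   alpha' = alpha / theta is bounded by a dilation of the one for phi. *)

From Stdlib Require Import Reals Lra Lia Psatz ZArith List.
From Stdlib Require Import Classical ClassicalEpsilon.
From Stdlib Require Import RList.
From Coquelicot Require Coquelicot.
Open Scope R_scope.

Ltac nlra := repeat match goal with H : ?a <> ?b |- _ =>
  let H' := fresh in destruct (Rtotal_order a b) as [H'|[H'|H']];
    [|contradiction|]; clear H end; lra.

(* The least upper bound of a bounded nonempty set (and 0 otherwise). *)
Definition Rsup (E : R -> Prop) : R :=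
  match excluded_middle_informative (bound E /\ exists x, E x) with
  | left H => proj1_sig (completeness E (proj1 H) (proj2 H))
  | right _ => 0
  end.

Lemma Rsup_lub E : bound E -> (exists x, E x) -> is_lub E (Rsup E).
Proof.
  intros Hb He. unfold Rsup.
  destruct (excluded_middle_informative _) as [H|H].
  - apply (proj2_sig (completeness E (proj1 H) (proj2 H))).
  - exfalso; apply H; auto.
Qed.

Lemma Rsup_ub E y : bound E -> E y -> y <= Rsup E.
Proof. intros Hb Hy. apply (Rsup_lub E Hb (ex_intro _ y Hy)). auto. Qed.

Lemma Rsup_le E m : (exists x, E x) -> (forall y, E y -> y <= m) -> Rsup E <= m.
Proof.
  intros He Hm. assert (Hb : bound E) by (exists m; exact Hm).
  apply (Rsup_lub E Hb He). exact Hm.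
Qed.

Definition Rinf (E : R -> Prop) : R := - Rsup (fun y => E (- y)).

Lemma Rinf_le E m y0 : (forall y, E y -> m <= y) -> E y0 -> Rinf E <= y0.
Proof.
  intros Hm Hy. unfold Rinf.
  assert (- y0 <= Rsup (fun y => E (- y))); [|lra].
  apply Rsup_ub; [|rewrite Ropp_involutive; auto].
  exists (- m). intros y Hy'. specialize (Hm _ Hy'). lra.
Qed.

Lemma Rinf_ge E m : (exists y, E y) -> (forall y, E y -> m <= y) -> m <= Rinf E.
Proof.
  intros [y0 Hy0] Hm. unfold Rinf.
  assert (Rsup (fun y => E (- y)) <= - m); [|lra].
  apply Rsup_le; [exists (- y0); rewrite Ropp_involutive; auto|].
  intros y Hy. specialize (Hm _ Hy). lra.
Qed.

Lemma div_le_div A B d d' : 0 < d -> 0 < d' -> A * d' <= B * d -> A / d <= B / d'.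
Proof.
  intros Hd Hd' H. apply (Rmult_le_reg_r (d * d')). nra.
  replace (A / d * (d * d')) with (A * d') by (field; lra).
  replace (B / d' * (d * d')) with (B * d) by (field; lra). lra.
Qed.

Lemma Rpower_pos x y : 0 < Rpower x y.
Proof. unfold Rpower; apply exp_pos. Qed.

Lemma Rpower_1_base th : Rpower 1 th = 1.
Proof. unfold Rpower. rewrite ln_1, Rmult_0_r, exp_0. auto. Qed.

Lemma Rpower_inv_base y e : 0 < y -> Rpower (/ y) e = / Rpower y e.
Proof.
  intros Hy. unfold Rpower. rewrite ln_Rinv by auto. rewrite <- exp_Ropp. f_equal. ring.
Qed.

Lemma Rpower_ge1 m e : 1 <= m -> 0 <= e -> 1 <= Rpower m e.
Proof.
  intros Hm He. pose proof (Rle_Rpower m 0 e Hm He) as H.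
  rewrite Rpower_O in H by lra. exact H.
Qed.

Lemma Rpower_amgm th y : 0 < th < 1 -> 0 < y -> Rpower y th <= th * y + (1 - th).
Proof.
  intros Hth Hy. unfold Rpower. set (a := ln y).
  assert (Ey : y = exp a) by (unfold a; rewrite exp_ln; auto).
  rewrite Ey.
  assert (H1 : exp a = exp (th * a) * exp ((1 - th) * a)).
  { rewrite <- exp_plus. f_equal. ring. }
  assert (H2 : 1 = exp (th * a) * exp (- (th * a))).
  { rewrite <- exp_plus. replace (th * a + - (th * a)) with 0 by ring. rewrite exp_0; auto. }
  pose proof (exp_ineq1_le ((1 - th) * a)) as I1.
  pose proof (exp_ineq1_le (- (th * a))) as I2.
  pose proof (exp_pos (th * a)) as P.
  assert (exp (th * a) * (1 + (1 - th) * a) <= exp (th * a) * exp ((1 - th) * a))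
    by (apply Rmult_le_compat_l; lra).
  assert (exp (th * a) * (1 + - (th * a)) <= exp (th * a) * exp (- (th * a)))
    by (apply Rmult_le_compat_l; lra).
  nra.
Qed.

Lemma Rpower_tangent th s x : 0 < th < 1 -> 0 < s -> 0 < x ->
  Rpower x th <= Rpower s th + th * (Rpower s th / s) * (x - s).
Proof.
  intros Hth Hs Hx.
  assert (E : Rpower x th = Rpower s th * Rpower (x / s) th).
  { rewrite Rpower_mult_distr; try (apply Rdiv_lt_0_compat; lra); auto.
    f_equal. field. lra. }
  rewrite E. pose proof (Rpower_amgm th (x / s) Hth (Rdiv_lt_0_compat _ _ Hx Hs)).
  pose proof (Rpower_pos s th).
  apply Rle_trans with (Rpower s th * (th * (x / s) + (1 - th))).
  - apply Rmult_le_compat_l; lra.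
  - right. field. lra.
Qed.

Lemma squash_lt1 x : 0 <= x -> x / (1 + x) < 1.
Proof.
  intros. apply (Rmult_lt_reg_r (1 + x)); [lra|]. unfold Rdiv.
  rewrite Rmult_assoc, Rinv_l by lra. lra.
Qed.

Lemma squash_mono x y : 0 <= x -> x <= y -> x / (1 + x) <= y / (1 + y).
Proof. intros. apply div_le_div; nra. Qed.

Lemma squash_lip x y : 0 <= x -> 0 <= y ->
  Rabs (x / (1 + x) - y / (1 + y)) <= Rabs (x - y).
Proof.
  intros Hx Hy. replace (x / (1 + x) - y / (1 + y)) with ((x - y) / ((1 + x) * (1 + y)))
    by (field; lra).
  unfold Rdiv. rewrite Rabs_mult, (Rabs_right (/ _)).
  2: { left. apply Rinv_0_lt_compat. nra. }
  assert (/ ((1 + x) * (1 + y)) <= 1) by (rewrite <- Rinv_1; apply Rinv_le_contravar; nra).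
  pose proof (Rabs_pos (x - y)). nra.
Qed.

Lemma subdivision_piece (l : list R) (i : nat) a b :
  ordered_Rlist l -> pos_Rl l 0 = a -> pos_Rl l (pred (length l)) = b ->
  (i < pred (length l))%nat -> a <= pos_Rl l i /\ pos_Rl l (S i) <= b.
Proof.
  intros Ho H0 H1 Hi; split.
  - rewrite <- H0; apply RList_P5; auto. apply RList_P3. exists i; split; auto; lia.
  - rewrite <- H1; apply RList_P7; auto. apply RList_P3. exists (S i); split; auto; lia.
Qed.

Definition stepfun_ext (f g : R -> R) (a b : R)
  (H : forall t, Rmin a b < t < Rmax a b -> f t = g t) (pr : IsStepFun f a b) :
  IsStepFun g a b.
Proof.
  destruct pr as [l [lf Hc]]. exists l. exists lf.
  destruct Hc as (Ho & H0 & H1 & Hl & Hk). repeat split; auto.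
  intros i Hi x Hx. rewrite <- H. apply (Hk i Hi x Hx).
  destruct (subdivision_piece l i _ _ Ho H0 H1 Hi). unfold open_interval in Hx. lra.
Defined.

Lemma stepfun_ext_int f g a b H pr :
  RiemannInt_SF (mkStepFun (stepfun_ext f g a b H pr)) = RiemannInt_SF (mkStepFun pr).
Proof. destruct pr as [l [lf [Ho [H0 [H1 [Hl Hk]]]]]]. reflexivity. Qed.

Fixpoint left_step (f : R -> R) (h : R) (n : nat) (a : R) (t : R) : R :=
  match n with
  | O => f a
  | S n' => if Rlt_dec t (a + h) then f a else left_step f h n' (a + h) t
  end.

Fixpoint step_gap (f : R -> R) (h : R) (n : nat) (a : R) (t : R) : R :=
  match n with
  | O => 0
  | S n' => if Rlt_dec t (a + h) then f a - f (a + h) else step_gap f h n' (a + h) t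
  end.

Lemma nonincr_step_approx (f : R -> R) (h : R) (hpos : 0 < h) (n : nat) :
  forall a b, b = a + INR n * h ->
  (forall x y, a <= x -> x <= y -> y <= b -> f y <= f x) ->
  { pr1 : IsStepFun (left_step f h n a) a b &
  { pr2 : IsStepFun (step_gap f h n a) a b |
    (forall t, a <= t <= b -> Rabs (f t - left_step f h n a t) <= step_gap f h n a t) /\
    RiemannInt_SF (mkStepFun pr2) = h * (f a - f b) } }.
Proof.
  induction n as [|n IH]; intros a b Hb Hmon.
  - simpl in Hb. replace b with a by lra.
    exists (StepFun_P4 a a (f a)). exists (StepFun_P4 a a 0). split.
    + intros t Ht. replace t with a by lra. simpl. rewrite Rminus_diag, Rabs_R0; lra.
    + etransitivity; [apply (StepFun_P18 a a 0)|]. ring.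
  - rewrite S_INR in Hb.
    assert (Hb' : b = (a + h) + INR n * h) by lra.
    assert (Hnh : 0 <= INR n * h) by (apply Rmult_le_pos; [apply pos_INR|lra]).
    destruct (IH (a + h) b Hb') as [p1 [p2 [Hbd Hint]]].
    { intros x y Hx Hxy Hy. apply Hmon; lra. }
    assert (Cell1 : forall t, Rmin a (a+h) < t < Rmax a (a+h) -> t < a + h).
    { intros t. rewrite Rmin_left, Rmax_right by lra. lra. }
    assert (Cell2 : forall t, Rmin (a+h) b < t < Rmax (a+h) b -> ~ t < a + h).
    { intros t. rewrite Rmin_left, Rmax_right by lra. lra. }
    assert (E1 : forall t, Rmin a (a+h) < t < Rmax a (a+h) ->
              fct_cte (f a) t = left_step f h (S n) a t).
    { intros t Ht. simpl. destruct (Rlt_dec t (a+h)); [reflexivity|].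
      exfalso; auto using Cell1. }
    assert (E2 : forall t, Rmin (a+h) b < t < Rmax (a+h) b ->
              left_step f h n (a+h) t = left_step f h (S n) a t).
    { intros t Ht. simpl. destruct (Rlt_dec t (a+h)); [|reflexivity].
      exfalso; eapply Cell2; eauto. }
    assert (F1 : forall t, Rmin a (a+h) < t < Rmax a (a+h) ->
              fct_cte (f a - f (a+h)) t = step_gap f h (S n) a t).
    { intros t Ht. simpl. destruct (Rlt_dec t (a+h)); [reflexivity|].
      exfalso; auto using Cell1. }
    assert (F2 : forall t, Rmin (a+h) b < t < Rmax (a+h) b ->
              step_gap f h n (a+h) t = step_gap f h (S n) a t).
    { intros t Ht. simpl. destruct (Rlt_dec t (a+h)); [|reflexivity].
      exfalso; eapply Cell2; eauto. }
    pose (q1 := stepfun_ext _ _ _ _ E1 (StepFun_P4 a (a+h) (f a))).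
    pose (q2 := stepfun_ext _ _ _ _ E2 p1).
    pose (r1 := stepfun_ext _ _ _ _ F1 (StepFun_P4 a (a+h) (f a - f (a+h)))).
    pose (r2 := stepfun_ext _ _ _ _ F2 p2).
    exists (StepFun_P46 q1 q2). exists (StepFun_P46 r1 r2). split.
    + intros t Ht. simpl. destruct (Rlt_dec t (a+h)) as [Hlt|Hge].
      * assert (f (a+h) <= f t) by (apply Hmon; lra).
        assert (f t <= f a) by (apply Hmon; lra).
        rewrite Rabs_left1; lra.
      * apply Hbd. lra.
    + rewrite <- (StepFun_P43 r1 r2). unfold r1, r2.
      rewrite !stepfun_ext_int, StepFun_P18, Hint. ring.
Qed.

Lemma cells_for_eps (K : R) (eps : posreal) : 0 <= K ->
  { n : nat | K < eps * INR (S n) }.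
Proof.
  intros HK. apply constructive_indefinite_description.
  destruct (archimed (K / eps)) as [H1 _]. pose proof (cond_pos eps).
  exists (Z.to_nat (up (K / eps))).
  destruct (Z_le_gt_dec (up (K / eps)) 0) as [Hz|Hz].
  - apply IZR_le in Hz. assert (K / eps < 0) by lra.
    assert (0 <= K / eps) by (apply Rle_mult_inv_pos; lra). lra.
  - rewrite S_INR, INR_IZR_INZ, Z2Nat.id by lia.
    assert (K = (K / eps) * eps) by (field; lra). nra.
Qed.

Lemma nonincreasing_integrable (f : R -> R) (a b : R) :
  a <= b -> (forall x y, a <= x -> x <= y -> y <= b -> f y <= f x) ->
  Riemann_integrable f a b.
Proof.
  intros Hab Hmon. destruct (Req_EM_T a b) as [Heq|Hne].
  { subst. apply RiemannInt_P7. }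
  assert (Hd : f b <= f a) by (apply Hmon; lra).
  intros eps.
  destruct (cells_for_eps ((b - a) * (f a - f b)) eps) as [n Hn]; [nra|].
  pose (h := (b - a) / INR (S n)).
  assert (HS : 0 < INR (S n)) by (apply lt_0_INR; lia).
  assert (hpos : 0 < h) by (unfold h; apply Rdiv_lt_0_compat; lra).
  assert (Hb : b = a + INR (S n) * h) by (unfold h; field; lra).
  destruct (nonincr_step_approx f h hpos (S n) a b Hb Hmon) as [p1 [p2 [Hbd Hint]]].
  exists (mkStepFun p1). exists (mkStepFun p2). split.
  - intros t Ht. rewrite Rmin_left, Rmax_right in Ht by lra. apply Hbd; lra.
  - rewrite Hint, Rabs_right by (apply Rle_ge, Rmult_le_pos; lra).
    apply (Rmult_lt_reg_r (INR (S n))); auto.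
    replace (h * (f a - f b) * INR (S n)) with ((b - a) * (f a - f b))
      by (unfold h; field; lra). lra.
Qed.

Section Dilation.
Import Coquelicot.Coquelicot.

Lemma improper_int_dilate (F G : R -> R) (a c C : R) :
  improper_int_finite F a -> (forall t, 0 <= F t) -> 0 < C -> 2 * a <= c ->
  (forall x y, c <= x -> x <= y -> G y <= G x) ->
  (forall t, c <= t -> G t <= C * F (t / 2)) ->
  improper_int_finite G c.
Proof.
  intros [HiF [M HM]] HF HC Hac Hmono Hbound. split.
  { intros b Hb. constructor. apply nonincreasing_integrable; [lra|].
    intros x y Hx Hxy Hy. apply Hmono; auto. }
  exists (2 * C * M). intros b pr Hb.
  rewrite <- RInt_Reals.
  assert (HexG : ex_RInt G c b) by (apply ex_RInt_Reals_1; exact pr).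
  assert (Hb2 : a <= b / 2) by lra.
  destruct (HiF (b / 2) Hb2) as [prF]. specialize (HM (b / 2) prF Hb2).
  assert (HexF : ex_RInt F a (b / 2)) by (apply ex_RInt_Reals_1; exact prF).
  assert (HexF2 : ex_RInt F (/ 2 * c + 0) (/ 2 * b + 0)).
  { apply (ex_RInt_Chasles_2 (V := R_CompleteNormedModule) F a); [lra|].
    replace (/ 2 * b + 0) with (b / 2) by field. auto. }
  assert (HexF1 : ex_RInt F a (/ 2 * c + 0)).
  { apply (ex_RInt_Chasles_1 (V := R_CompleteNormedModule) F _ _ (b / 2)); [lra|auto]. }
  (* the substitution y = x / 2 turns the integral of F over [c/2, b/2] into
     one over [c, b] *)
  pose proof (ex_RInt_comp_lin (V := R_CompleteNormedModule) F (/ 2) 0 c b HexF2) as HexH.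
  pose proof (RInt_comp_lin (V := R_CompleteNormedModule) F (/ 2) 0 c b HexF2) as EH.
  replace (/ 2 * b + 0) with (b / 2) in EH by field.
  assert (Dom : RInt G c b <= 2 * C * RInt F (/ 2 * c + 0) (b / 2)).
  { rewrite <- EH, <- (RInt_scal (V := R_CompleteNormedModule)) by auto.
    apply RInt_le; auto. apply (ex_RInt_scal (V := R_CompleteNormedModule)); auto.
    intros x Hx. change (scal (2 * C) (scal (/ 2) (F (/ 2 * x + 0)))) with
      ((2 * C) * (/ 2 * (F (/ 2 * x + 0)))).
    replace (2 * C * (/ 2 * F (/ 2 * x + 0))) with (C * F (x / 2))
      by (replace (/ 2 * x + 0) with (x / 2) by field; field).
    apply Hbound; lra. }
  (* Chasles at c / 2, and nonnegativity of F on [a, c / 2] *)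
  pose proof (RInt_Chasles (V := R_CompleteNormedModule) F a (/ 2 * c + 0) (/ 2 * b + 0)
                HexF1 HexF2) as Ch.
  change (plus ?u ?v) with (u + v) in Ch.
  replace (/ 2 * b + 0) with (b / 2) in Ch by field.
  rewrite (RInt_Reals F a (b / 2) prF) in Ch.
  assert (0 <= RInt F a (/ 2 * c + 0)) by (apply RInt_ge_0; auto; lra).
  apply Rle_trans with (2 * C * RInt F (/ 2 * c + 0) (b / 2)); [exact Dom|].
  apply Rmult_le_compat_l; lra.
Qed.

End Dilation.

Lemma ratio_nonneg g a t : 0 <= ratio_pow g a t.
Proof. unfold ratio_pow. destruct (g (Fin t)); [left; apply Rpower_pos|lra]. Qed.

(** * The concave slope transform k and its companion j = id / k *)

Section SlopeTransform.
Variable th : R.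
Hypothesis Hth : 0 < th < 1.

(* k(m) = m on [0, 1] and m^th beyond: concave and nondecreasing, k <= id.
   j(m) = m / k(m) is nondecreasing and >= 1.  kslope s is a slope of a
   supporting line of k at s. *)
Definition kpow m := if Rle_dec m 1 then m else Rpower m th.
Definition jpow m := if Rle_dec m 1 then 1 else Rpower m (1 - th).
Definition kslope m := if Rle_dec m 1 then 1 else th * (Rpower m th / m).

Lemma kpow_nonneg m : 0 <= m -> 0 <= kpow m.
Proof. intros; unfold kpow; destruct (Rle_dec m 1); [lra|pose proof (Rpower_pos m th); lra]. Qed.

Lemma kpow_le m : 0 <= m -> kpow m <= m.
Proof.
  intros Hm; unfold kpow; destruct (Rle_dec m 1); [lra|].
  pose proof (Rle_Rpower m th 1 ltac:(lra) ltac:(lra)) as Hp.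
  rewrite Rpower_1 in Hp by lra. exact Hp.
Qed.

Lemma kpow_ge1 m : 1 <= m -> kpow m = Rpower m th.
Proof.
  intros Hm. unfold kpow. destruct (Rle_dec m 1); auto.
  replace m with 1 by lra. rewrite Rpower_1_base. auto.
Qed.

Lemma kpow_mono x y : 0 <= x -> x <= y -> kpow x <= kpow y.
Proof.
  intros Hx Hxy. unfold kpow. destruct (Rle_dec x 1); destruct (Rle_dec y 1).
  - lra.
  - apply Rle_trans with 1; [lra|]. apply Rpower_ge1; lra.
  - lra.
  - destruct (Req_dec x y); [subst; lra|]. apply Rle_Rpower_l; lra.
Qed.

Lemma jpow_ge1 m : 1 <= jpow m.
Proof. unfold jpow; destruct (Rle_dec m 1); [lra|]. apply Rpower_ge1; lra. Qed.

Lemma jpow_mono x y : x <= y -> jpow x <= jpow y.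
Proof.
  intros Hxy. unfold jpow. destruct (Rle_dec x 1); destruct (Rle_dec y 1).
  - lra.
  - apply Rpower_ge1; lra.
  - lra.
  - destruct (Req_dec x y); [subst; lra|]. apply Rle_Rpower_l; lra.
Qed.

Lemma kpow_jpow m : 0 <= m -> kpow m * jpow m = m.
Proof.
  intros Hm. unfold kpow, jpow. destruct (Rle_dec m 1); [ring|].
  rewrite <- Rpower_plus. replace (th + (1 - th)) with 1 by ring.
  apply Rpower_1. lra.
Qed.

Lemma kpow_tangent s x : 0 <= s -> 0 <= x -> kpow x <= kpow s + kslope s * (x - s).
Proof.
  intros Hs Hx. unfold kpow at 2, kslope. destruct (Rle_dec s 1) as [Hs1|Hs1].
  - pose proof (kpow_le x Hx). lra.
  - pose proof (Rpower_pos s th) as P.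
    unfold kpow. destruct (Rle_dec x 1) as [Hx1|Hx1].
    + pose proof (Rpower_tangent th s 1 Hth ltac:(lra) ltac:(lra)) as T1.
      rewrite Rpower_1_base in T1.
      assert (E : th * (Rpower s th / s) * s = th * Rpower s th) by (field; lra).
      assert (0 <= Rpower s th + th * (Rpower s th / s) * (0 - s)) by nra.
      nra.
    + apply Rpower_tangent; auto; lra.
Qed.

Lemma kpow_unbounded X : exists B, 1 <= B /\ X <= kpow B.
Proof.
  set (Y := Rmax 1 X). assert (HY : 1 <= Y) by apply Rmax_l.
  exists (Rpower Y (/ th)).
  assert (HB : 1 <= Rpower Y (/ th)).
  { apply Rpower_ge1; auto. left; apply Rinv_0_lt_compat; lra. }
  split; auto. rewrite kpow_ge1 by auto.
  rewrite Rpower_mult. replace (/ th * th) with 1 by (field; lra).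
  rewrite Rpower_1 by lra. apply Rmax_r.
Qed.

Lemma jpow_unbounded X : exists B, 1 <= B /\ X <= jpow B.
Proof.
  set (Y := Rmax 2 X). assert (HY : 2 <= Y) by apply Rmax_l.
  exists (Rpower Y (/ (1 - th))).
  assert (HB : 1 < Rpower Y (/ (1 - th))).
  { pose proof (Rpower_lt Y 0 (/ (1 - th)) ltac:(lra)
                  ltac:(apply Rinv_0_lt_compat; lra)) as Hlt.
    rewrite Rpower_O in Hlt by lra. exact Hlt. }
  split; [lra|]. unfold jpow. destruct (Rle_dec _ 1) as [E|E]; [lra|].
  rewrite Rpower_mult. replace (/ (1 - th) * (1 - th)) with 1 by (field; lra).
  rewrite Rpower_1 by lra. apply Rmax_r.
Qed.

End SlopeTransform.

Section Envelope.
Variable I : Type.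
Variable P : I -> Prop.
Variable f : I -> R -> R.

Definition env_values (s : R) : R -> Prop := fun y => exists i, P i /\ y = f i s.

Definition envelope (p : ER) : ER :=
  match p with
  | Inf => Inf
  | Fin s => if excluded_middle_informative (bound (env_values s))
             then Fin (Rsup (env_values s)) else Inf
  end.

Lemma envelope_lower i s : P i -> ERle (Fin (f i s)) (envelope (Fin s)).
Proof.
  intros Hi. simpl. destruct (excluded_middle_informative _) as [Hb|Hb]; simpl; auto.
  apply Rsup_ub; auto. exists i; auto.
Qed.

Lemma envelope_exact s v : (exists i, P i /\ f i s = v) -> (forall i, P i -> f i s <= v) ->
  envelope (Fin s) = Fin v.
Proof.
  intros [i0 [Hi0 E0]] Hle.
  assert (Hb : bound (env_values s)) by (exists v; intros y [i [Hi E]]; subst; auto).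
  simpl. destruct (excluded_middle_informative _) as [_|N]; [|contradiction].
  f_equal. apply Rle_antisym.
  - apply Rsup_le; [exists (f i0 s); exists i0; auto|]. intros y [i [Hi E]]; subst; auto.
  - apply Rsup_ub; auto. exists i0; auto.
Qed.

Hypothesis Hne : exists i, P i.

Lemma envelope_nondecreasing :
  (forall i x y, P i -> x <= y -> f i x <= f i y) -> ER_nondecreasing envelope.
Proof.
  intros Hf [x|] [y|] Hx Hy Hxy; simpl in Hxy; try contradiction;
    [|destruct (envelope (Fin x)); simpl; auto|simpl; auto].
  destruct Hne as [i0 Hi0].
  unfold envelope at 2. destruct (excluded_middle_informative (bound (env_values y))) as [By|_];
    [|destruct (envelope (Fin x)); simpl; auto].
  assert (Dom : forall z, env_values x z -> z <= Rsup (env_values y)).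
  { intros z [i [Hi E]]; subst. apply Rle_trans with (f i y); auto.
    apply Rsup_ub; auto. exists i; auto. }
  simpl. destruct (excluded_middle_informative (bound (env_values x))) as [_|N];
    [|exfalso; apply N; exists (Rsup (env_values y)); exact Dom].
  simpl. apply Rsup_le; auto. exists (f i0 x), i0; auto.
Qed.

Lemma envelope_convex :
  (forall i x y l, P i -> 0 < l < 1 -> f i (l * x + (1 - l) * y) <= l * f i x + (1 - l) * f i y) ->
  ER_convex envelope.
Proof.
  intros Hf [x|] [y|] l Hx Hy Hl; unfold ERcomb; simpl ERscale; simpl ERadd;
    [|repeat destruct (excluded_middle_informative _); simpl; auto ..].
  set (w := l * x + (1 - l) * y). destruct Hne as [i0 Hi0].
  destruct (excluded_middle_informative (bound (env_values x))) as [Bx|_];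
    [|destruct (envelope (Fin w)); simpl; auto].
  destruct (excluded_middle_informative (bound (env_values y))) as [By|_];
    [|destruct (envelope (Fin w)); simpl; auto].
  assert (Bnd : forall z, env_values w z ->
            z <= l * Rsup (env_values x) + (1 - l) * Rsup (env_values y)).
  { intros z [i [Hi E]]; subst.
    assert (f i x <= Rsup (env_values x)) by (apply Rsup_ub; auto; exists i; auto).
    assert (f i y <= Rsup (env_values y)) by (apply Rsup_ub; auto; exists i; auto).
    pose proof (Hf i x y l Hi Hl). unfold w. nra. }
  simpl. destruct (excluded_middle_informative (bound (env_values w))) as [_|N];
    [|exfalso; apply N; eexists; exact Bnd].
  simpl. apply Rsup_le; auto. exists (f i0 w), i0; auto.
Qed.

End Envelope.

Section Factorization.
Variable phi : ER -> ER.
Hypothesis Hnn : maps_nonneg phi.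
Hypothesis Hmon : ER_nondecreasing phi.
Hypothesis Hconv : ER_convex phi.

(* phi is finite at t, and its real value there (0 where it is infinite). *)
Definition finite_at t := exists y, phi (Fin t) = Fin y.
Definition fval t := match phi (Fin t) with Fin y => y | Inf => 0 end.

Lemma fval_eq t : finite_at t -> phi (Fin t) = Fin (fval t).
Proof. intros [y Hy]. unfold fval. rewrite Hy. auto. Qed.

Lemma not_finite_at t : ~ finite_at t -> phi (Fin t) = Inf.
Proof. intros H. destruct (phi (Fin t)) eqn:E; auto. exfalso; apply H; exists x; auto. Qed.

Lemma fval_nonneg t : 0 <= t -> 0 <= fval t.
Proof.
  intros Ht. unfold fval. pose proof (Hnn (Fin t) Ht) as H.
  destruct (phi (Fin t)); simpl in *; lra.
Qed.

Lemma finite_down x y : 0 <= x -> x <= y -> finite_at y -> finite_at x.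
Proof.
  intros Hx Hxy [z Hz]. pose proof (Hmon (Fin x) (Fin y) Hx ltac:(simpl; lra) Hxy) as H.
  rewrite Hz in H. destruct (phi (Fin x)) eqn:E; simpl in H; [exists x0; auto|contradiction].
Qed.

Lemma fval_mono x y : 0 <= x -> x <= y -> finite_at y -> fval x <= fval y.
Proof.
  intros Hx Hxy Hy. pose proof (finite_down x y Hx Hxy Hy) as Hfx.
  pose proof (Hmon (Fin x) (Fin y) Hx ltac:(simpl; lra) Hxy) as H.
  rewrite (fval_eq _ Hy), (fval_eq _ Hfx) in H. exact H.
Qed.

Lemma fval_convex x y l : 0 <= x -> 0 <= y -> finite_at x -> finite_at y -> 0 < l < 1 ->
  fval (l * x + (1 - l) * y) <= l * fval x + (1 - l) * fval y.
Proof.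
  intros Hx Hy Hfx Hfy Hl. pose proof (Hconv (Fin x) (Fin y) l Hx Hy Hl) as H.
  unfold ERcomb in H. simpl in H. rewrite (fval_eq _ Hfx), (fval_eq _ Hfy) in H.
  simpl in H. unfold fval. destruct (phi (Fin (l * x + (1 - l) * y))); simpl in H.
  - exact H.
  - contradiction.
Qed.

Definition slope x y := (fval y - fval x) / (y - x).

Lemma slope_mul x y : (y - x) * slope x y = fval y - fval x.
Proof.
  unfold slope. destruct (Req_dec x y) as [E|E].
  - subst. rewrite !Rminus_diag. ring.
  - field. lra.
Qed.

Lemma slope_nonneg x y : 0 <= x -> x <= y -> finite_at y -> 0 <= slope x y.
Proof.
  intros Hx Hxy Hy. destruct (Req_dec x y) as [E|E].
  - subst. unfold slope. rewrite !Rminus_diag. unfold Rdiv. rewrite Rmult_0_l. lra.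
  - unfold slope. apply Rle_mult_inv_pos; [|nlra].
    assert (fval x <= fval y) by (apply fval_mono; auto). lra.
Qed.

Lemma three_slopes x y z : 0 <= x -> x < y -> y < z -> finite_at z ->
  slope x y <= slope x z /\ slope x z <= slope y z.
Proof.
  intros Hx Hxy Hyz Hz.
  assert (Hfx : finite_at x) by (apply (finite_down x z); auto; lra).
  set (l := (z - y) / (z - x)).
  assert (Hl : 0 < l < 1).
  { unfold l; split; [apply Rdiv_lt_0_compat; lra|].
    apply (Rmult_lt_reg_r (z - x)); [lra|]. unfold Rdiv. rewrite Rmult_assoc, Rinv_l; lra. }
  assert (Ey : l * x + (1 - l) * z = y) by (unfold l; field; lra).
  pose proof (fval_convex x z l Hx ltac:(lra) Hfx Hz Hl) as C. rewrite Ey in C.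
  assert (El : l * (z - x) = z - y) by (unfold l; field; lra).
  split; unfold slope; apply div_le_div; try lra.
  - assert (fval y - fval x <= (1 - l) * (fval z - fval x)) by lra.
    assert ((1 - l) * (z - x) = y - x) by lra.
    nra.
  - assert (l * (fval z - fval x) <= fval z - fval y) by lra.
    nra.
Qed.

Lemma slope_incr x y p q : 0 <= x -> x < y -> x <= p -> p < q -> y <= q -> finite_at q ->
  slope x y <= slope p q.
Proof.
  intros Hx Hxy Hxp Hpq Hyq Hq.
  apply Rle_trans with (slope x q).
  - destruct (Req_dec y q) as [E|E]; [subst; lra|].
    apply (three_slopes x y q); auto; lra.
  - destruct (Req_dec x p) as [E|E]; [subst; lra|].
    apply (three_slopes x p q); auto; lra.
Qed.

(** * The k-primitive of phi: an infimum of sums over partitions *)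

Variable th : R.
Hypothesis Hth : 0 < th < 1.

Local Notation k := (kpow th).
Local Notation j := (jpow th).

(* Concavity of k: splitting [a, b] at c lowers the one-cell sum. *)
Lemma cell_split_le a c b : 0 <= a -> a <= c -> c <= b -> finite_at b ->
  (c - a) * k (slope a c) + (b - c) * k (slope c b) <= (b - a) * k (slope a b).
Proof.
  intros Ha Hac Hcb Hb.
  assert (Hc : finite_at c) by (apply (finite_down c b); auto; lra).
  set (s := slope a b).
  assert (Hs : 0 <= s) by (apply slope_nonneg; auto; lra).
  pose proof (kpow_tangent th Hth s (slope a c) Hs (slope_nonneg a c Ha Hac Hc)) as T1.
  pose proof (kpow_tangent th Hth s (slope c b) Hs (slope_nonneg c b ltac:(lra) Hcb Hb)) as T2.
  pose proof (slope_mul a c). pose proof (slope_mul c b). pose proof (slope_mul a b).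
  fold s in H1.
  assert ((c - a) * k (slope a c) <= (c - a) * (k s + kslope th s * (slope a c - s)))
    by (apply Rmult_le_compat_l; lra).
  assert ((b - c) * k (slope c b) <= (b - c) * (k s + kslope th s * (slope c b - s)))
    by (apply Rmult_le_compat_l; lra).
  assert (E : (c - a) * (k s + kslope th s * (slope a c - s))
              + (b - c) * (k s + kslope th s * (slope c b - s))
     = (b - a) * k s
       + kslope th s * ((c - a) * slope a c + (b - c) * slope c b - (b - a) * s)) by ring.
  assert (E2 : (c - a) * slope a c + (b - c) * slope c b - (b - a) * s = 0) by lra.
  rewrite E2, Rmult_0_r, Rplus_0_r in E. lra.
Qed.

Fixpoint partition (a : R) (l : list R) (b : R) : Prop :=
  match l with nil => a <= b | x :: l' => a <= x /\ partition x l' b end.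

Fixpoint ksum (a : R) (l : list R) (b : R) : R :=
  match l with
  | nil => (b - a) * k (slope a b)
  | x :: l' => (x - a) * k (slope a x) + ksum x l' b
  end.

Lemma partition_le a l b : partition a l b -> a <= b.
Proof.
  revert a; induction l as [|x l IH]; simpl; intros a H; [nlra|].
  destruct H as [H1 H2]. specialize (IH _ H2). lra.
Qed.

Lemma partition_concat a l1 c l2 b : partition a l1 c -> partition c l2 b ->
  partition a (l1 ++ c :: l2) b /\ ksum a (l1 ++ c :: l2) b = ksum a l1 c + ksum c l2 b.
Proof.
  revert a; induction l1 as [|x l1 IH]; simpl; intros a H1 H2.
  - split; auto.
  - destruct H1 as [Hx Hv]. destruct (IH x Hv H2) as [IH1 IH2]. split; auto.
    rewrite IH2. ring.
Qed.

Lemma partition_refine a l b c : 0 <= a -> finite_at b -> partition a l b -> a <= c -> c <= b ->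
  exists l1 l2, partition a l1 c /\ partition c l2 b /\
    ksum a l1 c + ksum c l2 b <= ksum a l b.
Proof.
  revert a; induction l as [|x l IH]; simpl; intros a Ha Hb Hv Hac Hcb.
  - exists nil, nil. simpl. repeat split; auto. apply cell_split_le; auto.
  - destruct Hv as [Hax Hv]. pose proof (partition_le _ _ _ Hv) as Hxb.
    destruct (Rle_dec c x) as [Hcx|Hcx].
    + exists nil, (x :: l). simpl. repeat split; auto.
      pose proof (cell_split_le a c x Ha Hac Hcx ltac:(apply (finite_down x b); auto; nlra)).
      lra.
    + destruct (IH x ltac:(nlra) Hb Hv ltac:(nlra) Hcb) as [l1 [l2 [V1 [V2 S]]]].
      exists (x :: l1), l2. simpl. repeat split; auto. lra.
Qed.

Lemma ksum_ge_low_slope a l b L : 0 <= L -> partition a l b ->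
  (forall x y, a <= x -> x < y -> y <= b -> L <= slope x y) ->
  (b - a) * k L <= ksum a l b.
Proof.
  intros HL. revert a; induction l as [|x l IH]; simpl; intros a Hv Hs.
  - destruct (Req_dec a b) as [E|E]; [subst; rewrite Rminus_diag; nlra|].
    apply Rmult_le_compat_l; [nlra|]. apply kpow_mono; auto. apply Hs; nlra.
  - destruct Hv as [Hax Hv]. pose proof (partition_le _ _ _ Hv).
    assert (IH' := IH x Hv ltac:(intros; apply Hs; nlra)).
    assert ((x - a) * k L <= (x - a) * k (slope a x)).
    { destruct (Req_dec a x) as [E|E]; [subst; rewrite Rminus_diag; nlra|].
      apply Rmult_le_compat_l; [nlra|]. apply kpow_mono; auto. apply Hs; nlra. }
    nra.
Qed.

(* If all chord slopes in [a, b] are <= U, every k-sum is at least the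
   increment of phi divided by j(U), since m = k(m) j(m) <= k(m) j(U). *)
Lemma ksum_ge_high_slope a l b U : 0 <= a -> finite_at b -> partition a l b ->
  (forall x y, a <= x -> x < y -> y <= b -> slope x y <= U) ->
  (fval b - fval a) / j U <= ksum a l b.
Proof.
  intros Ha Hb. pose proof (jpow_ge1 th Hth U) as J.
  assert (Cell : forall x y, 0 <= x -> x <= y -> y <= b ->
            (x < y -> slope x y <= U) ->
            (fval y - fval x) / j U <= (y - x) * k (slope x y)).
  { intros x y Hx Hxy Hy Hs.
    destruct (Req_dec x y) as [E|E].
    - subst. rewrite !Rminus_diag. unfold Rdiv; nlra.
    - assert (Hsl : 0 <= slope x y)
        by (apply slope_nonneg; auto; apply (finite_down y b); auto; nlra).
      pose proof (kpow_jpow th (slope x y) Hsl) as KJ.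
      pose proof (jpow_mono th Hth _ _ (Hs ltac:(nlra))) as JM.
      pose proof (kpow_nonneg th _ Hsl) as KN.
      rewrite <- (slope_mul x y). apply (Rmult_le_reg_r (j U)); [nlra|].
      unfold Rdiv. rewrite Rmult_assoc, Rinv_l, Rmult_1_r by nlra.
      rewrite <- KJ at 1.
      assert (k (slope x y) * j (slope x y) <= k (slope x y) * j U)
        by (apply Rmult_le_compat_l; nlra).
      assert ((y - x) * (k (slope x y) * j (slope x y)) <= (y - x) * (k (slope x y) * j U))
        by (apply Rmult_le_compat_l; nlra).
      lra. }
  revert a Ha; induction l as [|x l IH]; simpl; intros a Ha Hv Hs.
  - apply Cell; auto; try nlra. intros; apply Hs; nlra.
  - destruct Hv as [Hax Hv]. pose proof (partition_le _ _ _ Hv).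
    pose proof (Cell a x ltac:(nlra) Hax H ltac:(intros; apply Hs; nlra)).
    pose proof (IH x ltac:(nlra) Hv ltac:(intros; apply Hs; nlra)).
    replace ((fval b - fval a) / j U) with ((fval x - fval a) / j U + (fval b - fval x) / j U)
      by (field; nlra).
    lra.
Qed.

Lemma ksum_nonneg a l b : 0 <= a -> finite_at b -> partition a l b -> 0 <= ksum a l b.
Proof.
  intros Ha Hb Hv. pose proof (ksum_ge_low_slope a l b 0 ltac:(nlra) Hv) as H.
  assert (Hk0 : k 0 = 0) by (unfold kpow; destruct (Rle_dec 0 1); nlra).
  rewrite Hk0, Rmult_0_r in H. apply H.
  intros x y Hx Hxy Hy. pose proof (partition_le _ _ _ Hv).
  apply slope_nonneg; auto; try nlra. apply (finite_down y b); auto; nlra.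
Qed.

Lemma ksum_degenerate l a : partition a l 0 -> 0 <= a -> ksum a l 0 = 0.
Proof.
  revert a; induction l as [|x l IH]; simpl; intros a Hv Ha.
  - replace a with 0 by nlra. rewrite Rminus_diag; ring.
  - destruct Hv as [H1 H2]. pose proof (partition_le _ _ _ H2).
    rewrite (IH x H2 ltac:(nlra)). replace a with 0 by nlra. replace x with 0 by nlra.
    rewrite Rminus_diag. ring.
Qed.

Definition kprim t := Rinf (fun y => exists l, partition 0 l t /\ y = ksum 0 l t).

Lemma kprim_le t l : 0 <= t -> finite_at t -> partition 0 l t -> kprim t <= ksum 0 l t.
Proof.
  intros Ht Hf Hv. apply (Rinf_le _ 0); [|exists l; auto].
  intros y [l' [Hv' E]]. subst. apply ksum_nonneg; auto; nlra.
Qed.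

Lemma kprim_ge t m : 0 <= t -> (forall l, partition 0 l t -> m <= ksum 0 l t) -> m <= kprim t.
Proof.
  intros Ht H. apply Rinf_ge.
  - exists (ksum 0 nil t). exists nil. simpl; auto.
  - intros y [l [Hv E]]. subst; auto.
Qed.

Lemma kprim_nonneg t : 0 <= t -> finite_at t -> 0 <= kprim t.
Proof. intros. apply kprim_ge; auto. intros. apply ksum_nonneg; auto; nlra. Qed.

Lemma kprim_zero : kprim 0 = 0.
Proof.
  apply Rle_antisym.
  - apply (Rinf_le _ 0).
    + intros y [l [Hv E]]. subst. rewrite ksum_degenerate; auto; lra.
    + exists nil. simpl. split; [nlra|]. rewrite Rminus_diag. ring.
  - apply kprim_ge; [nlra|]. intros l Hv. rewrite ksum_degenerate; auto; lra.
Qed.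

(* Upper bound: extend a partition of [0, u] by the cell [u, t]. *)
Lemma kprim_up u t : 0 <= u -> u <= t -> finite_at t ->
  kprim t <= kprim u + (t - u) * k (slope u t).
Proof.
  intros Hu Hut Ht.
  assert (kprim t - (t - u) * k (slope u t) <= kprim u); [|lra].
  apply kprim_ge; auto. intros l1 Hv1.
  destruct (partition_concat 0 l1 u nil t Hv1 Hut) as [V E].
  pose proof (kprim_le t _ ltac:(nlra) Ht V). rewrite E in H. simpl in H. lra.
Qed.

(* Lower bound: a lower bound Lo for the k-sums over [u, t] gives
   kprim t >= kprim u + Lo, by refining partitions at u. *)
Lemma kprim_split_ge u t Lo : 0 <= u -> u <= t -> finite_at t ->
  (forall l2, partition u l2 t -> Lo <= ksum u l2 t) -> kprim u + Lo <= kprim t.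
Proof.
  intros Hu Hut Ht HL. apply kprim_ge; [nlra|]. intros l Hv.
  destruct (partition_refine 0 l t u ltac:(nlra) Ht Hv Hu Hut) as [l1 [l2 [V1 [V2 S]]]].
  assert (kprim u <= ksum 0 l1 u) by (apply kprim_le; auto; apply (finite_down u t); auto).
  specialize (HL l2 V2). lra.
Qed.

Lemma kprim_mono u t : 0 <= u -> u <= t -> finite_at t -> kprim u <= kprim t.
Proof.
  intros Hu Hut Ht. pose proof (kprim_split_ge u t 0 Hu Hut Ht) as H.
  assert (kprim u + 0 <= kprim t); [|nlra]. apply H. intros l2 Hv.
  apply ksum_nonneg; auto.
Qed.

Lemma kprim_le_fval t : 0 <= t -> finite_at t -> kprim t <= fval t.
Proof.
  intros Ht Hf. pose proof (kprim_le t nil Ht Hf Ht) as H. simpl in H.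
  pose proof (slope_nonneg 0 t ltac:(lra) Ht Hf) as S.
  pose proof (kpow_le th Hth _ S).
  assert (Hk : (t - 0) * k (slope 0 t) <= (t - 0) * slope 0 t)
    by (apply Rmult_le_compat_l; nlra).
  rewrite slope_mul in Hk. pose proof (fval_nonneg 0 ltac:(nlra)). lra.
Qed.

Lemma kprim_far s t : 0 < s -> s <= t -> finite_at t ->
  kprim s + (t - s) * k (slope 0 s) <= kprim t.
Proof.
  intros Hs Hst Ft. apply kprim_split_ge; auto; try lra. intros l2 Hv.
  assert (Fs : finite_at s) by (apply finite_down with t; auto; lra).
  apply ksum_ge_low_slope; auto. apply slope_nonneg; auto; lra.
  intros p q Hp Hpq Hq. apply slope_incr; auto; try lra. apply finite_down with t; auto; lra.
Qed.

(* Convexity of the k-primitive, in three-point form. *)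
Lemma kprim_three_points x w y : 0 <= x -> x <= w -> w <= y -> finite_at y ->
  (y - x) * kprim w <= (y - w) * kprim x + (w - x) * kprim y.
Proof.
  intros Hx Hxw Hwy Hy.
  assert (Hw : finite_at w) by (apply (finite_down w y); auto; nlra).
  set (K := k (slope x w)).
  pose proof (kprim_up x w Hx Hxw Hw) as U. fold K in U.
  assert (L : kprim w + (y - w) * K <= kprim y).
  { apply kprim_split_ge; auto; try lra. intros l2 Hv.
    apply ksum_ge_low_slope; auto; [apply slope_nonneg; auto|].
    intros p q Hp Hpq Hq.
    assert (Fq : finite_at q) by (apply (finite_down q y); auto; nlra).
    destruct (Req_dec x w) as [E|E].
    + subst. unfold slope at 1. rewrite !Rminus_diag. unfold Rdiv. rewrite Rmult_0_l.
      apply slope_nonneg; auto; lra.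
    + apply slope_incr; auto; nlra. }
  assert ((y - w) * kprim w <= (y - w) * (kprim x + (w - x) * K))
    by (apply Rmult_le_compat_l; nlra).
  assert ((w - x) * (kprim w + (y - w) * K) <= (w - x) * kprim y)
    by (apply Rmult_le_compat_l; nlra).
  nra.
Qed.

Lemma kprim_convex x y l : 0 <= x -> 0 <= y -> finite_at x -> finite_at y -> 0 < l < 1 ->
  kprim (l * x + (1 - l) * y) <= l * kprim x + (1 - l) * kprim y.
Proof.
  intros Hx Hy Fx Fy Hl.
  destruct (Rtotal_order x y) as [Hlt|[Heq|Hgt]].
  - pose proof (kprim_three_points x (l * x + (1 - l) * y) y Hx ltac:(nra) ltac:(nra) Fy) as C.
    replace (y - (l * x + (1 - l) * y)) with (l * (y - x)) in C by ring.
    replace (l * x + (1 - l) * y - x) with ((1 - l) * (y - x)) in C by ring.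
    apply (Rmult_le_reg_l (y - x)); [lra|]. nra.
  - subst. replace (l * y + (1 - l) * y) with y by ring. lra.
  - pose proof (kprim_three_points y (l * x + (1 - l) * y) x Hy ltac:(nra) ltac:(nra) Fx) as C.
    replace (x - (l * x + (1 - l) * y)) with ((1 - l) * (x - y)) in C by ring.
    replace (l * x + (1 - l) * y - y) with (l * (x - y)) in C by ring.
    apply (Rmult_le_reg_l (x - y)); [lra|]. nra.
Qed.

Hypothesis Hnc : ER_nonconstant phi.
Hypothesis Hcont : ER_continuous phi.
Variables t0 alpha tstar : R.
Hypothesis Ht0 : is_t0 phi t0.
Hypothesis Halpha : 0 < alpha.
Hypothesis Htstar : t0 < tstar.
Hypothesis Hint : improper_int_finite (ratio_pow phi alpha) tstar.

Lemma finite0 : finite_at 0.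
Proof.
  apply NNPP. intros H. apply not_finite_at in H.
  destruct Hnc as [p [q [Hp [Hq Hne]]]]. apply Hne.
  assert (A : forall r, ERnonneg r -> phi r = Inf).
  { intros r Hr. pose proof (Hmon (Fin 0) r ltac:(simpl; lra) Hr) as M.
    assert (Hle : ERle (Fin 0) r) by (destruct r; simpl in *; auto).
    specialize (M Hle). rewrite H in M. destruct (phi r); simpl in M; [contradiction|auto]. }
  rewrite (A p Hp), (A q Hq). auto.
Qed.

Lemma t0_nonneg : 0 <= t0.
Proof.
  destruct Ht0 as [[Hub Hlub]|[_ E]]; [|lra].
  apply NNPP; intro Hn.
  assert (Hb : is_upper_bound (fun t => 0 <= t /\ phi (Fin t) = Fin 0) (t0 - 1)).
  { intros t [Ht Hz]. specialize (Hub t (conj Ht Hz)). lra. }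
  specialize (Hlub _ Hb). lra.
Qed.

Lemma tstar_pos : 0 < tstar.
Proof. pose proof t0_nonneg. lra. Qed.

Lemma fval_pos t : t0 < t -> finite_at t -> 0 < fval t.
Proof.
  intros Ht Hf. assert (Ht' : 0 <= t) by (pose proof t0_nonneg; lra).
  pose proof (fval_nonneg t Ht').
  destruct (Req_dec (fval t) 0) as [E|E]; [|nlra].
  exfalso.
  assert (Z : 0 <= t /\ phi (Fin t) = Fin 0) by (rewrite (fval_eq t Hf), E; auto).
  destruct Ht0 as [[Hub _]|[Hn _]].
  - specialize (Hub t Z). lra.
  - apply (Hn t Z).
Qed.

(* By continuity, the set where phi is finite is open in [0, oo). *)
Lemma finite_beyond t : 0 <= t -> finite_at t -> exists c, t < c /\ finite_at c.
Proof.
  intros Ht Hf. pose proof (fval_nonneg t Ht) as Hft.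
  set (eps := 1 - fval t / (1 + fval t)).
  assert (He : 0 < eps) by (unfold eps; pose proof (squash_lt1 _ Hft); lra).
  destruct (Hcont (Fin t) Ht eps He) as [d [Hd Hc]].
  exists (t + d / 2). split; [lra|].
  apply NNPP; intro Hn. apply not_finite_at in Hn.
  specialize (Hc (Fin (t + d / 2)) ltac:(simpl; lra)).
  rewrite Hn, (fval_eq t Hf) in Hc. simpl in Hc.
  assert (Rabs ((t + d / 2) / (1 + (t + d / 2)) - t / (1 + t)) < d).
  { eapply Rle_lt_trans; [apply squash_lip; lra|]. rewrite Rabs_right; lra. }
  specialize (Hc H). rewrite Rabs_right in Hc; [unfold eps in *; lra|].
  pose proof (squash_lt1 _ Hft). lra.
Qed.

(* By continuity, phi tends to oo at a point b where it is infinite. *)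
Lemma blowup_from_left b K : 0 < b -> phi (Fin b) = Inf -> 0 <= K ->
  exists h, 0 < h <= b / 2 /\
    forall q, b - h <= q <= b -> finite_at q -> K < fval q.
Proof.
  intros Hb Hinf HK.
  set (eps := 1 - K / (1 + K)).
  assert (He : 0 < eps) by (unfold eps; pose proof (squash_lt1 _ HK); lra).
  destruct (Hcont (Fin b) ltac:(simpl; lra) eps He) as [d [Hd Hc]].
  exists (Rmin d b / 2).
  pose proof (Rmin_l d b). pose proof (Rmin_r d b). pose proof (Rmin_glb_lt d b 0 Hd Hb).
  split; [lra|]. intros q Hq Fq.
  assert (Hq0 : 0 <= q) by lra.
  specialize (Hc (Fin q) Hq0). rewrite Hinf, (fval_eq q Fq) in Hc. simpl in Hc.
  assert (Hdist : Rabs (q / (1 + q) - b / (1 + b)) < d).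
  { eapply Rle_lt_trans; [apply squash_lip; lra|]. rewrite Rabs_left1; lra. }
  specialize (Hc Hdist).
  pose proof (fval_nonneg q Hq0) as Fq0. pose proof (squash_lt1 _ Fq0).
  rewrite Rabs_left in Hc by lra.
  apply Rnot_le_lt. intro Hle. pose proof (squash_mono _ _ Fq0 Hle). unfold eps in *. lra.
Qed.

(* If phi grew at most linearly, it would be finite everywhere: otherwise it
   would blow up at the end b of its finite domain, while staying <= phi 0 + B b. *)
Lemma linear_growth_finite B : 0 <= B ->
  (forall u, 0 < u -> finite_at u -> fval u - fval 0 < B * u) ->
  forall t, 0 <= t -> finite_at t.
Proof.
  intros HB Hlin. apply NNPP; intro NAll.
  assert (Ex : exists T, 0 <= T /\ ~ finite_at T).
  { apply NNPP; intro H. apply NAll. intros t Ht. apply NNPP; intro Hf. apply H; eauto. }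
  destruct Ex as [T [HT HnT]].
  set (E := fun t => 0 <= t /\ finite_at t).
  assert (Eb : bound E).
  { exists T. intros t [Ht Hf]. apply Rnot_lt_le; intro C. apply HnT.
    apply (finite_down T t); auto; lra. }
  pose proof (Rsup_lub E Eb (ex_intro _ 0 (conj (Rle_refl 0) finite0))) as [Hub Hlub].
  set (b := Rsup E) in *.
  assert (Hb0 : 0 <= b) by (apply Hub; split; [lra|exact finite0]).
  assert (Below : forall q, 0 <= q < b -> finite_at q).
  { intros q Hq. apply NNPP; intro Nq. assert (Hq_ub : is_upper_bound E q).
    { intros t [Ht Hf]. apply Rnot_lt_le; intro C. apply Nq.
      apply (finite_down q t); auto; lra. }
    specialize (Hlub q Hq_ub). lra. }
  destruct (classic (finite_at b)) as [Fb|NFb].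
  - destruct (finite_beyond b Hb0 Fb) as [c [Hbc Fc]].
    assert (c <= b) by (apply Hub; split; auto; lra). lra.
  - assert (Hbpos : 0 < b) by (destruct (Req_dec b 0) as [Z|Z]; [rewrite Z in NFb;
      exfalso; exact (NFb finite0)|nlra]).
    pose proof (fval_nonneg 0 ltac:(lra)).
    destruct (blowup_from_left b (fval 0 + B * b) Hbpos (not_finite_at b NFb) ltac:(nra))
      as [h [Hh Hbig]].
    assert (Fq : finite_at (b - h)) by (apply Below; lra).
    specialize (Hbig (b - h) ltac:(lra) Fq).
    pose proof (Hlin (b - h) ltac:(lra) Fq). nra.
Qed.

(* If phi is finite and grows at most linearly, t / phi t stays bounded below
   on [tstar, oo), contradicting the finiteness of the improper integral. *)
Lemma linear_growth_diverges B : 1 <= B ->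
  (forall t, 0 <= t -> finite_at t) ->
  (forall u, 0 < u -> finite_at u -> fval u - fval 0 < B * u) -> False.
Proof.
  intros HB All Hlin.
  destruct Hint as [Hi [M HM]].
  pose proof tstar_pos as Htp. pose proof (fval_nonneg 0 ltac:(lra)) as F0p.
  set (C := fval 0 / tstar + B).
  assert (Hf0t : 0 <= fval 0 / tstar) by (apply Rle_mult_inv_pos; lra).
  assert (HC : 0 < C) by (unfold C; lra).
  set (c := Rpower (/ C) alpha).
  assert (Hc : 0 < c) by apply Rpower_pos.
  set (b := tstar + (Rabs M + 1) / c).
  assert (Hb : tstar <= b).
  { unfold b. assert (0 < (Rabs M + 1) / c)
      by (apply Rdiv_lt_0_compat; pose proof (Rabs_pos M); lra). lra. }
  destruct (Hi b Hb) as [pr]. specialize (HM b pr Hb).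
  assert (Low : c * (b - tstar) <= RiemannInt pr).
  { rewrite <- (RiemannInt_P15 (RiemannInt_P14 tstar b c)).
    apply RiemannInt_P19; auto. intros x [Hx1 Hx2]. unfold fct_cte, ratio_pow.
    assert (Hfx : finite_at x) by (apply All; lra).
    rewrite (fval_eq x Hfx). apply Rle_Rpower_l; [lra|].
    split; [apply Rinv_0_lt_compat; lra|].
    assert (Pos : 0 < fval x) by (apply fval_pos; auto; lra).
    assert (fval 0 <= fval 0 / tstar * x).
    { replace (fval 0) with (fval 0 / tstar * tstar) at 1 by (field; lra).
      apply Rmult_le_compat_l; lra. }
    assert (fval x < C * x) by (pose proof (Hlin x ltac:(lra) Hfx); unfold C; nra).
    apply (Rmult_le_reg_r (C * fval x)); [nra|].
    replace (/ C * (C * fval x)) with (fval x) by (field; lra).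
    replace (x / fval x * (C * fval x)) with (C * x) by (field; lra). lra. }
  assert (c * (b - tstar) = Rabs M + 1) by (unfold b; field; lra).
  pose proof (Rle_abs M). lra.
Qed.

Lemma slopes_unbounded B : exists u, 0 < u /\ finite_at u /\ B * u <= fval u - fval 0.
Proof.
  apply NNPP; intro Hn. set (B' := Rmax B 1).
  assert (HB' : 1 <= B') by apply Rmax_r.
  assert (Hlin : forall u, 0 < u -> finite_at u -> fval u - fval 0 < B' * u).
  { intros u Hu Hf. apply Rnot_le_lt. intro C. apply Hn. exists u. repeat split; auto.
    pose proof (Rmax_l B 1). unfold B' in *. nra. }
  exact (linear_growth_diverges B' HB' (linear_growth_finite B' ltac:(lra) Hlin) Hlin).
Qed.

Lemma slopes_far B :
  exists u, 0 < u /\ finite_at u /\ forall t, u <= t -> finite_at t -> B * t <= fval t - fval 0.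
Proof.
  destruct (slopes_unbounded B) as [u [Hu [Fu Hb]]]. exists u; repeat split; auto.
  intros t Hut Ft.
  assert (slope 0 u <= slope 0 t).
  { destruct (Req_dec u t) as [E|E]; [subst; lra|]. apply slope_incr; auto; nlra. }
  pose proof (slope_mul 0 u). pose proof (slope_mul 0 t).
  assert (B <= slope 0 u).
  { apply (Rmult_le_reg_l u); [lra|]. rewrite Rminus_0_r in H0. lra. }
  rewrite Rminus_0_r in H1.
  assert (B * t <= slope 0 t * t) by (apply Rmult_le_compat_r; lra). lra.
Qed.

(* Superlinearity forces phi (oo) = oo. *)
Lemma phi_Inf : phi Inf = Inf.
Proof.
  destruct (classic (forall t, 0 <= t -> finite_at t)) as [All|NAll].
  - destruct (phi Inf) eqn:EI; auto. exfalso.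
    destruct (slopes_far 1) as [u [Hu [Fu Hs]]].
    pose proof (fval_nonneg 0 ltac:(lra)). pose proof (Rabs_pos x). pose proof (Rle_abs x).
    set (t := u + Rabs x + 1).
    assert (Ft : finite_at t) by (apply All; unfold t; lra).
    specialize (Hs t ltac:(unfold t; lra) Ft).
    pose proof (Hmon (Fin t) Inf ltac:(simpl; unfold t; lra) I I) as M.
    rewrite EI, (fval_eq t Ft) in M. simpl in M. unfold t in *. lra.
  - assert (Ex : exists T, 0 <= T /\ ~ finite_at T).
    { apply NNPP; intro H. apply NAll. intros t Ht. apply NNPP; intro Hf. apply H; eauto. }
    destruct Ex as [T [HT HnT]].
    pose proof (Hmon (Fin T) Inf HT I I) as M. rewrite (not_finite_at T HnT) in M.
    destruct (phi Inf); simpl in M; [contradiction|auto].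
Qed.

(** * The inner function phit *)

Definition phit (p : ER) : ER :=
  match p with
  | Inf => Inf
  | Fin t => match phi (Fin t) with Fin _ => Fin (kprim t) | Inf => Inf end
  end.

Lemma phit_finite t : finite_at t -> phit (Fin t) = Fin (kprim t).
Proof. intros Ft. simpl. rewrite (fval_eq t Ft). auto. Qed.

Lemma phit_infinite t : ~ finite_at t -> phit (Fin t) = Inf.
Proof. intros N. simpl. rewrite (not_finite_at t N). auto. Qed.

Lemma phit_nonneg : maps_nonneg phit.
Proof.
  intros [t|] Ht; simpl in *; auto. destruct (classic (finite_at t)) as [F|N].
  - rewrite (fval_eq t F). simpl. apply kprim_nonneg; auto.
  - rewrite (not_finite_at t N). simpl; auto.
Qed.

Lemma phit_nondecreasing : ER_nondecreasing phit.
Proof.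
  intros [x|] [y|] Hx Hy Hxy; simpl in Hx, Hy, Hxy; try contradiction.
  - destruct (classic (finite_at y)) as [Fy|Ny].
    + assert (Fx : finite_at x) by (apply finite_down with y; auto).
      rewrite (phit_finite x Fx), (phit_finite y Fy). apply kprim_mono; auto.
    + rewrite (phit_infinite y Ny). destruct (phit (Fin x)); simpl; auto.
  - destruct (phit (Fin x)); simpl; auto.
  - simpl; auto.
Qed.

Lemma phit_convex : ER_convex phit.
Proof.
  intros [x|] [y|] l Hx Hy Hl; unfold ERcomb; cbn -[phit];
    [|destruct (phit (Fin x)); simpl; auto|simpl; auto ..].
  simpl in Hx, Hy. set (w := l * x + (1 - l) * y).
  destruct (classic (finite_at x)) as [Fx|Nx];
    [|rewrite (phit_infinite x Nx); destruct (phit (Fin w)); simpl; auto].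
  destruct (classic (finite_at y)) as [Fy|Ny];
    [|rewrite (phit_infinite y Ny); destruct (phit (Fin w)), (phit (Fin x)); simpl; auto].
  assert (Hw : 0 <= w) by (unfold w; nra).
  assert (Fw : finite_at w).
  { apply finite_down with (Rmax x y); auto.
    - pose proof (Rmax_l x y). pose proof (Rmax_r x y). unfold w. nra.
    - unfold Rmax; destruct (Rle_dec x y); auto. }
  rewrite (phit_finite x Fx), (phit_finite y Fy), (phit_finite w Fw). simpl.
  apply kprim_convex; auto.
Qed.

Lemma phit_superlinear : ER_superlinear phit.
Proof.
  intros M. set (M1 := Rmax M 1).
  assert (HM1 : 1 <= M1) by apply Rmax_r. assert (HM : M <= M1) by apply Rmax_l.
  destruct (kpow_unbounded th Hth (2 * M1)) as [B [HB1 HB]].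
  destruct (slopes_far B) as [u [Hu [Fu Hs]]].
  exists (2 * u). split; [lra|]. intros t Ht.
  destruct (classic (finite_at t)) as [Ft|Nt]; [|rewrite (phit_infinite t Nt); simpl; auto].
  rewrite (phit_finite t Ft). simpl.
  set (s := t / 2).
  assert (Fs : finite_at s) by (apply finite_down with t; unfold s; auto; lra).
  specialize (Hs s ltac:(unfold s; lra) Fs).
  assert (HslB : B <= slope 0 s).
  { pose proof (slope_mul 0 s). apply (Rmult_le_reg_l s); [unfold s; lra|].
    rewrite Rminus_0_r in H. lra. }
  pose proof (kprim_far s t ltac:(unfold s; lra) ltac:(unfold s; lra) Ft) as L.
  pose proof (kprim_nonneg s ltac:(unfold s; lra) Fs).
  pose proof (kpow_mono th Hth B (slope 0 s) ltac:(lra) HslB).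
  replace (t - s) with (t / 2) in L by (unfold s; field).
  assert (t / 2 * (2 * M1) <= t / 2 * k (slope 0 s)) by (apply Rmult_le_compat_l; lra).
  assert (M * t <= M1 * t) by (apply Rmult_le_compat_r; lra).
  lra.
Qed.

Lemma phit_le_phi p : ERnonneg p -> ERle (phit p) (phi p).
Proof.
  destruct p as [t|]; intros Hp; simpl in Hp.
  - destruct (classic (finite_at t)) as [Ft|Nt].
    + rewrite (phit_finite t Ft), (fval_eq t Ft). simpl. apply kprim_le_fval; auto.
    + rewrite (phit_infinite t Nt), (not_finite_at t Nt). simpl; auto.
  - simpl. rewrite phi_Inf. simpl; auto.
Qed.

(** * The outer function psi *)

(* The left derivative of phi at u: the supremum of the slopes of chords
   ending at u (and 0 if u = 0). *)
Definition left_slopes u := fun y => y = 0 \/ exists v, 0 <= v < u /\ y = slope v u.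
Definition left_slope u := Rsup (left_slopes u).

Lemma left_slopes_bound u : 0 <= u -> finite_at u -> bound (left_slopes u).
Proof.
  intros Hu Fu. destruct (finite_beyond u Hu Fu) as [c [Huc Fc]].
  exists (Rmax 0 (slope u c)). intros y [E|[v [Hv E]]]; subst; [apply Rmax_l|].
  apply Rle_trans with (slope u c); [|apply Rmax_r]. apply slope_incr; auto; lra.
Qed.

Lemma slope_le_left_slope u v : 0 <= v < u -> finite_at u -> slope v u <= left_slope u.
Proof.
  intros Hv Fu. apply Rsup_ub; [apply left_slopes_bound; auto; lra|]. right; exists v; auto.
Qed.

Lemma left_slope_le u t : 0 <= u -> u < t -> finite_at t -> left_slope u <= slope u t.
Proof.
  intros Hu Hut Ft. apply Rsup_le; [exists 0; left; auto|].
  intros y [E|[v [Hv E]]]; subst.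
  - apply slope_nonneg; auto; lra.
  - apply slope_incr; auto; lra.
Qed.

(* The line through (kprim u, phi u) of slope j(phi'(u-)). *)
Definition support_line u s := fval u + j (left_slope u) * (s - kprim u).

(* Lines at u < t lie below (kprim t, phi t): over [u, t], phi grows by
   (t - u) m and phit by at most (t - u) k(m), with m = slope u t and
   j(phi'(u-)) <= j(m). *)
Lemma support_below_right u t : 0 <= u -> u < t -> finite_at t ->
  support_line u (kprim t) <= fval t.
Proof.
  intros Hu Hut Ft. unfold support_line.
  set (s := slope u t).
  assert (Hs : 0 <= s) by (apply slope_nonneg; auto; lra).
  pose proof (kprim_up u t Hu ltac:(lra) Ft) as U. fold s in U.
  pose proof (kprim_mono u t Hu ltac:(lra) Ft) as M.
  pose proof (jpow_mono th Hth _ _ (left_slope_le u t Hu Hut Ft)) as J. fold s in J.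
  pose proof (jpow_ge1 th Hth (left_slope u)) as J1.
  pose proof (kpow_jpow th s Hs) as KJ. pose proof (slope_mul u t) as SM. fold s in SM.
  pose proof (kpow_nonneg th s Hs) as KN.
  assert (j (left_slope u) * (kprim t - kprim u) <= j s * (kprim t - kprim u))
    by (apply Rmult_le_compat_r; lra).
  assert (j s * (kprim t - kprim u) <= j s * ((t - u) * k s))
    by (apply Rmult_le_compat_l; lra).
  assert (j s * ((t - u) * k s) = (t - u) * s)
    by (replace (j s * ((t - u) * k s)) with ((t - u) * (k s * j s)) by ring; rewrite KJ; ring).
  lra.
Qed.

(* Lines at u > t lie below (kprim t, phi t): all slopes over [t, u] are
   <= phi'(u-), so phit grows by at least (phi u - phi t) / j(phi'(u-)). *)
Lemma support_below_left u t : 0 <= t -> t < u -> finite_at u ->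
  support_line u (kprim t) <= fval t.
Proof.
  intros Ht Htu Fu. unfold support_line.
  assert (Lo : kprim t + (fval u - fval t) / j (left_slope u) <= kprim u).
  { apply kprim_split_ge; auto; try lra. intros l2 Hv.
    apply ksum_ge_high_slope; auto; try lra.
    intros x y Hx Hxy Hy. apply Rle_trans with (slope x u).
    - destruct (Req_dec y u) as [E|E]; [subst; lra|]. apply slope_incr; auto; nlra.
    - apply slope_le_left_slope; auto; lra. }
  pose proof (jpow_ge1 th Hth (left_slope u)) as J1.
  assert (fval u - fval t <= j (left_slope u) * (kprim u - kprim t)); [|nra].
  apply (Rmult_le_reg_r (/ j (left_slope u))); [apply Rinv_0_lt_compat; lra|].
  replace (j (left_slope u) * (kprim u - kprim t) * / j (left_slope u))
    with (kprim u - kprim t) by (field; lra).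
  unfold Rdiv in Lo. lra.
Qed.

Lemma support_below u t : 0 <= u -> 0 <= t -> finite_at u -> finite_at t ->
  support_line u (kprim t) <= fval t.
Proof.
  intros Hu Ht Fu Ft. destruct (Rtotal_order u t) as [Hlt|[Heq|Hgt]].
  - apply support_below_right; auto.
  - subst. unfold support_line. rewrite Rminus_diag, Rmult_0_r. lra.
  - apply support_below_left; auto.
Qed.

Definition support_index u := 0 <= u /\ finite_at u.
Definition psi : ER -> ER := envelope R support_index support_line.

Lemma support_index_ne : exists u, support_index u.
Proof. exists 0. split; [lra|exact finite0]. Qed.

Lemma psi_at_kprim t : 0 <= t -> finite_at t -> psi (Fin (kprim t)) = Fin (fval t).
Proof.
  intros Ht Ft. apply envelope_exact.
  - exists t. split; [split; auto|]. unfold support_line. rewrite Rminus_diag. ring.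
  - intros u [Hu Fu]. apply support_below; auto.
Qed.

Lemma psi_above_line u s : support_index u ->
  ERle (Fin (support_line u s)) (psi (Fin s)).
Proof. apply envelope_lower. Qed.

Lemma psi_nonneg : maps_nonneg psi.
Proof.
  intros [s|] Hs; [|simpl; auto]. simpl in Hs.
  pose proof (psi_above_line 0 s (conj (Rle_refl 0) finite0)) as L.
  unfold support_line in L. rewrite kprim_zero, Rminus_0_r in L.
  pose proof (fval_nonneg 0 ltac:(lra)). pose proof (jpow_ge1 th Hth (left_slope 0)).
  destruct (psi (Fin s)); simpl in *; nra.
Qed.

Lemma psi_nondecreasing : ER_nondecreasing psi.
Proof.
  apply envelope_nondecreasing; [exact support_index_ne|].
  intros u x y _ Hxy. unfold support_line.
  pose proof (jpow_ge1 th Hth (left_slope u)). nra.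
Qed.

Lemma psi_convex : ER_convex psi.
Proof.
  apply envelope_convex; [exact support_index_ne|].
  intros u x y l _ _. unfold support_line. right; ring.
Qed.

(* Large left slopes make the support lines, hence psi, superlinear. *)
Lemma psi_superlinear : ER_superlinear psi.
Proof.
  intros M. set (M1 := Rmax M 1).
  assert (HM1 : 1 <= M1) by apply Rmax_r. assert (HM : M <= M1) by apply Rmax_l.
  destruct (jpow_unbounded th Hth (2 * M1)) as [B [HB1 HB]].
  destruct (slopes_unbounded B) as [u [Hu [Fu Hs]]].
  assert (HslB : B <= slope 0 u).
  { pose proof (slope_mul 0 u). apply (Rmult_le_reg_l u); [lra|].
    rewrite Rminus_0_r in H. lra. }
  assert (Hj : 2 * M1 <= j (left_slope u)).
  { apply Rle_trans with (j B); auto. apply (jpow_mono th Hth).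
    apply Rle_trans with (slope 0 u); auto. apply slope_le_left_slope; auto; lra. }
  pose proof (kprim_nonneg u ltac:(lra) Fu) as Gu.
  pose proof (Rmax_l 1 (2 * kprim u)). pose proof (Rmax_r 1 (2 * kprim u)).
  exists (Rmax 1 (2 * kprim u)). split; [lra|]. intros s Hs'.
  pose proof (psi_above_line u s (conj (Rlt_le _ _ Hu) Fu)) as L.
  destruct (psi (Fin s)); simpl in *; auto.
  unfold support_line in L. pose proof (fval_nonneg u ltac:(lra)).
  assert (2 * M1 * (s - kprim u) <= j (left_slope u) * (s - kprim u))
    by (apply Rmult_le_compat_r; lra).
  assert (M * s <= M1 * s) by (apply Rmult_le_compat_r; lra).
  nra.
Qed.

Lemma phi_factorization p : ERnonneg p -> phi p = psi (phit p).
Proof.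
  destruct p as [t|]; intros Hp; simpl in Hp; [|rewrite phi_Inf; reflexivity].
  destruct (classic (finite_at t)) as [Ft|Nt].
  - rewrite (phit_finite t Ft), (psi_at_kprim t Hp Ft), (fval_eq t Ft). auto.
  - rewrite (phit_infinite t Nt), (not_finite_at t Nt). auto.
Qed.

Lemma far_threshold : exists m, tstar <= m /\ 1 <= m /\
  forall s, m <= s -> finite_at s -> 1 <= slope 0 s /\ fval s <= 2 * s * slope 0 s.
Proof.
  pose proof (fval_nonneg 0 ltac:(lra)) as F0.
  destruct (slopes_far (1 + fval 0)) as [u [Hu [Fu Hs]]].
  set (m := Rmax (Rmax u tstar) 1).
  assert (Hm1 : u <= m) by (unfold m; eapply Rle_trans; [apply Rmax_l|apply Rmax_l]).
  assert (Hm2 : tstar <= m) by (unfold m; eapply Rle_trans; [apply Rmax_r|apply Rmax_l]).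
  assert (Hm3 : 1 <= m) by (unfold m; apply Rmax_r).
  exists m. split; [|split]; auto. intros s Hms Fs.
  pose proof (Hs s ltac:(lra) Fs) as Hss.
  pose proof (slope_mul 0 s) as SM. rewrite Rminus_0_r in SM.
  assert (Hsig : 1 + fval 0 <= slope 0 s) by (apply (Rmult_le_reg_l s); lra).
  split; [lra|]. nra.
Qed.

Lemma kprim_lower_far m t : 1 <= m -> 2 * m <= t -> finite_at t -> 1 <= slope 0 (t / 2) ->
  t / 2 * Rpower (slope 0 (t / 2)) th <= kprim t.
Proof.
  intros Hm Ht Ft Hsl.
  pose proof (kprim_far (t / 2) t ltac:(lra) ltac:(lra) Ft) as L.
  pose proof (kprim_nonneg (t / 2) ltac:(lra) (finite_down (t / 2) t ltac:(lra) ltac:(lra) Ft)).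
  rewrite (kpow_ge1 th _ Hsl) in L. replace (t - t / 2) with (t / 2) in L by field. lra.
Qed.

(* phit t / t is nondecreasing, since phit is convex with phit 0 = 0. *)
Lemma kprim_ratio_mono x y : 0 < x -> x <= y -> finite_at y -> kprim x * y <= kprim y * x.
Proof.
  intros Hx Hxy Fy. destruct (Req_dec x y) as [E|E]; [subst; lra|].
  set (l := 1 - x / y).
  assert (Hxy' : 0 < x / y < 1).
  { split; [apply Rdiv_lt_0_compat; lra|].
    apply (Rmult_lt_reg_r y); [lra|]. unfold Rdiv.
    rewrite Rmult_assoc, Rinv_l, Rmult_1_r by lra. nlra. }
  pose proof (kprim_convex 0 y l ltac:(lra) ltac:(lra) finite0 Fy ltac:(unfold l; lra)) as GC.
  replace (l * 0 + (1 - l) * y) with x in GC by (unfold l; field; lra).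
  rewrite kprim_zero in GC. replace (1 - l) with (x / y) in GC by (unfold l; ring).
  apply (Rmult_le_reg_r (/ y)); [apply Rinv_0_lt_compat; lra|].
  replace (kprim x * y * / y) with (kprim x) by (field; lra).
  unfold Rdiv in GC. lra.
Qed.

(* With s = t/2, X = s / phi s and sigma = slope 0 s >= 1: phi s <= 2 s sigma
   gives sigma >= 1 / (2X), so t / phit t <= 2 / sigma^th <= 2 (2X)^th. *)
Lemma ratio_base_bound m t : tstar <= m -> 1 <= m -> 2 * m <= t -> finite_at t ->
  1 <= slope 0 (t / 2) -> fval (t / 2) <= 2 * (t / 2) * slope 0 (t / 2) ->
  0 < fval (t / 2) /\ t / kprim t <= 2 * Rpower (2 * ((t / 2) / fval (t / 2))) th.
Proof.
  intros Hmt Hm Ht Ft H1 H3.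
  pose proof (kprim_lower_far m t Hm Ht Ft H1) as H2.
  assert (Fs : finite_at (t / 2)) by (apply finite_down with t; auto; lra).
  set (s := t / 2) in *. set (sg := slope 0 s) in *.
  assert (Hspos : 0 < s) by (unfold s; lra).
  assert (H4 : 0 < fval s) by (apply fval_pos; auto; unfold s; lra).
  split; auto.
  set (X := s / fval s).
  assert (HX : 0 < X) by (unfold X; apply Rdiv_lt_0_compat; lra).
  assert (Hsg : / (2 * X) <= sg).
  { unfold X. rewrite Rinv_mult, Rinv_div.
    apply (Rmult_le_reg_l (2 * s)); [lra|].
    replace (2 * s * (/ 2 * (fval s / s))) with (fval s) by (field; lra). lra. }
  assert (P1 : Rpower (/ (2 * X)) th <= Rpower sg th).
  { apply Rle_Rpower_l; [lra|]. split; auto. apply Rinv_0_lt_compat; lra. }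
  rewrite Rpower_inv_base in P1 by lra.
  pose proof (Rpower_pos (2 * X) th) as P2p. pose proof (Rpower_pos sg th) as P3p.
  apply Rle_trans with (t / (s * Rpower sg th)).
  - apply (div_le_div t t); nra.
  - replace (t / (s * Rpower sg th)) with (2 / Rpower sg th)
      by (unfold s; field; split; lra).
    apply (Rmult_le_reg_r (Rpower sg th)); auto.
    replace (2 / Rpower sg th * Rpower sg th) with 2 by (field; lra).
    apply (Rmult_le_reg_r (/ Rpower (2 * X) th)); [apply Rinv_0_lt_compat; auto|].
    replace (2 * Rpower (2 * X) th * Rpower sg th * / Rpower (2 * X) th)
      with (2 * Rpower sg th) by (field; lra). nra.
Qed.

Section Exponent.
Variable alpha' : R.
Hypothesis Hexp : th * alpha' = alpha.

Lemma alpha'_pos : 0 < alpha'.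
Proof. destruct (Rlt_or_le 0 alpha') as [H|H]; auto. nra. Qed.

Lemma ratio_pointwise m t : tstar <= m -> 1 <= m -> 2 * m <= t -> finite_at t ->
  1 <= slope 0 (t / 2) -> fval (t / 2) <= 2 * (t / 2) * slope 0 (t / 2) ->
  Rpower (t / kprim t) alpha' <= Rpower 2 (alpha' + alpha) * ratio_pow phi alpha (t / 2).
Proof.
  intros Hmt Hm Ht Ft H1 H3.
  destruct (ratio_base_bound m t Hmt Hm Ht Ft H1 H3) as [Hf Q].
  pose proof (kprim_lower_far m t Hm Ht Ft H1) as H2.
  pose proof (Rpower_pos (slope 0 (t / 2)) th).
  assert (Fs : finite_at (t / 2)) by (apply finite_down with t; auto; lra).
  set (X := t / 2 / fval (t / 2)) in *.
  assert (HX : 0 < X) by (unfold X; apply Rdiv_lt_0_compat; lra).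
  pose proof alpha'_pos.
  apply Rle_trans with (Rpower (2 * Rpower (2 * X) th) alpha').
  { apply Rle_Rpower_l; [lra|]. split; auto. apply Rdiv_lt_0_compat; nra. }
  rewrite <- Rpower_mult_distr by (try apply Rpower_pos; lra).
  rewrite Rpower_mult, Hexp, <- Rpower_mult_distr by lra.
  rewrite Rpower_plus. unfold ratio_pow. rewrite (fval_eq _ Fs). fold X. right; ring.
Qed.

Lemma ratio_phit_finite t : finite_at t -> ratio_pow phit alpha' t = Rpower (t / kprim t) alpha'.
Proof. intros Ft. unfold ratio_pow. rewrite (phit_finite t Ft). reflexivity. Qed.

Lemma ratio_phit_infinite t : ~ finite_at t -> ratio_pow phit alpha' t = 0.
Proof. intros Nt. unfold ratio_pow. rewrite (phit_infinite t Nt). reflexivity. Qed.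

Lemma phit_integrable : exists ts, t0 < ts /\ improper_int_finite (ratio_pow phit alpha') ts.
Proof.
  pose proof tstar_pos.
  destruct far_threshold as [m [Hmt [Hm1 Far]]].
  assert (Half : forall t, 2 * m <= t -> finite_at t ->
            1 <= slope 0 (t / 2) /\ fval (t / 2) <= 2 * (t / 2) * slope 0 (t / 2)).
  { intros t Ht Ft. apply Far; [lra|]. apply finite_down with t; auto; lra. }
  assert (Gpos : forall t, 2 * m <= t -> finite_at t -> 0 < kprim t).
  { intros t Ht Ft. destruct (Half t Ht Ft) as [H1 _].
    pose proof (kprim_lower_far m t Hm1 Ht Ft H1).
    pose proof (Rpower_pos (slope 0 (t / 2)) th). nra. }
  exists (2 * m). split; [lra|].
  apply (improper_int_dilate (ratio_pow phi alpha) _ tstar (2 * m) (Rpower 2 (alpha' + alpha)));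
    auto using ratio_nonneg, Rpower_pos; try lra.
  - (* t / phit t is nonincreasing where phi is finite; the integrand is 0 elsewhere *)
    intros x y Hx Hxy. destruct (classic (finite_at y)) as [Fy|Ny];
      [|rewrite (ratio_phit_infinite y Ny); apply ratio_nonneg].
    assert (Fx : finite_at x) by (apply finite_down with y; auto; lra).
    rewrite (ratio_phit_finite x Fx), (ratio_phit_finite y Fy).
    pose proof (Gpos x Hx Fx). pose proof (Gpos y ltac:(lra) Fy).
    pose proof alpha'_pos.
    apply Rle_Rpower_l; [lra|]. split; [apply Rdiv_lt_0_compat; lra|].
    apply div_le_div; auto.
    pose proof (kprim_ratio_mono x y ltac:(lra) Hxy Fy). lra.
  - intros t Ht. destruct (classic (finite_at t)) as [Ft|Nt].
    + rewrite (ratio_phit_finite t Ft). destruct (Half t Ht Ft) as [H1 H3].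
      apply (ratio_pointwise m); auto.
    + rewrite (ratio_phit_infinite t Nt).
      pose proof (ratio_nonneg phi alpha (t / 2)). pose proof (Rpower_pos 2 (alpha' + alpha)).
      nra.
Qed.

End Exponent.

Lemma factorization alpha' : th * alpha' = alpha ->
  exists psi phit : ER -> ER,
    strictly_convex psi /\ strictly_convex phit /\
    (forall p, ERnonneg p -> phi p = psi (phit p)) /\
    (forall p, ERnonneg p -> ERle (phit p) (phi p)) /\
    exists tstar', t0 < tstar' /\ improper_int_finite (ratio_pow phit alpha') tstar'.
Proof.
  intros Hexp. exists psi, phit.
  split; [|split; [|split; [|split]]].
  - repeat split; [exact psi_nonneg|exact psi_nondecreasing|exact psi_convex|
                   exact psi_superlinear].
  - repeat split; [exact phit_nonneg|exact phit_nondecreasing|exact phit_convex|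
                   exact phit_superlinear].
  - exact phi_factorization.
  - exact phit_le_phi.
  - exact (phit_integrable alpha' Hexp).
Qed.

End Factorization.

Theorem lemma2p1 (phi : ER -> ER) (t0 alpha tstar alpha' : R) :
  maps_nonneg phi ->
  ER_nonconstant phi ->
  ER_continuous phi ->
  ER_nondecreasing phi ->
  ER_convex phi ->
  is_t0 phi t0 ->
  0 < alpha ->
  t0 < tstar ->
  improper_int_finite (ratio_pow phi alpha) tstar ->
  alpha < alpha' ->
  exists psi phit : ER -> ER,
    strictly_convex psi /\ strictly_convex phit /\
    (forall p, ERnonneg p -> phi p = psi (phit p)) /\
    (forall p, ERnonneg p -> ERle (phit p) (phi p)) /\
    exists tstar', t0 < tstar' /\ improper_int_finite (ratio_pow phit alpha') tstar'.
Proof.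
  intros Hnn Hnc Hcont Hmon Hconv Ht0 Halpha Htstar Hint Halpha'.
  (* flatten the slopes with the exponent th = alpha / alpha' in (0, 1) *)
  assert (Hth : 0 < alpha / alpha' < 1).
  { split; [apply Rdiv_lt_0_compat; lra|].
    apply (Rmult_lt_reg_r alpha'); [lra|]. unfold Rdiv. rewrite Rmult_assoc, Rinv_l; lra. }
  apply (factorization phi Hnn Hmon Hconv (alpha / alpha') Hth Hnc Hcont t0 alpha tstar
           Ht0 Halpha Htstar Hint).
  field. lra.
Qed.
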